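(* Let $f_0,f_2>0$, let $0<\Lambda_1<\Lambda_{in}$, and let $\mathfrak{c}:[\Lambda_1,\Lambda_{in}]\to\mathbb{R}$ be continuous with $192 f_2\Lambda^2-2f_0\mathfrak{c}(\Lambda)\neq 0$ for all $\Lambda$. Define $$G_{\rm eff}(\Lambda)=\frac{3\pi}{192 f_2\Lambda^2-2f_0\,\mathfrak{c}(\Lambda)} .$$ Let $h:[\Lambda_1,\Lambda_{in}]\to\mathbb{R}$ be continuous with $1-\tfrac{4\pi}{3}G_{\rm eff}(\Lambda)h(\Lambda)\neq 0$, and define $G_{{\rm eff},H}(\Lambda)=\dfrac{G_{\rm eff}(\Lambda)}{1-\frac{4\pi}{3}G_{\rm eff}(\Lambda)h(\Lambda)}$. Use the time–energy relation $\Lambda=t^{-1/2}$ (so $t\in[\Lambda_{in}^{-2},\Lambda_1^{-2}]$), and for a function $\mathcal{M}$ of $t$ write $\mathcal{M}(\Lambda):=\mathcal{M}(t)$ at $t=\Lambda^{-2}$. (a) (No gravitational memory.) If $\mathcal{M}:[\Lambda_{in}^{-2},\Lambda_1^{-2}]\to(0,\infty)$ is differentiable and satisfies $\dfrac{d\mathcal{M}}{dt}=-\big(G_{\rm eff}(t^{-1/2})\,\mathcal{M}(t)\big)^{-2}$, then for every $\Lambda\in[\Lambda_1,\Lambda_{in}]$ $$\mathcal{M}(\Lambda)=\sqrt[3]{\mathcal{M}^3(\Lambda_{in})-\frac{2}{3\pi^2}\int_\Lambda^{\Lambda_{in}}\frac{(192 f_2x^2-2f_0\mathfrak{c}(x))^2}{x^3}\,dx}.$$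 (b) (Gravitational memory.) If $\mathcal{M}:[\Lambda_{in}^{-2},\Lambda_1^{-2}]\to(0,\infty)$ is differentiable and satisfies $\dfrac{d\mathcal{M}}{dt}=-\big(G_{{\rm eff},H}(t^{-1/2})\,\mathcal{M}(t)\big)^{-2}$, then for every $\Lambda\in[\Lambda_1,\Lambda_{in}]$ $$\mathcal{M}(\Lambda)=\sqrt[3]{\mathcal{M}^3(\Lambda_{in})-6\int_\Lambda^{\Lambda_{in}}\frac{\big(1-\frac{4\pi}{3}G_{\rm eff}(x)h(x)\big)^2}{x^3\,G_{\rm eff}(x)^2}\,dx}.$$
   Context: Physical interpretation: $\mathcal{M}$ is the mass of a primordial black hole evaporating by Hawking radiation in the radiation-dominated era ($a(t)=t^{1/2}$, energy $\Lambda=1/a(t)$), $\Lambda_{in}$ the energy at which this era begins. $G_{\rm eff}$ is the effective gravitational constant of the noncommutative geometry model, with $\mathfrak{c}(\Lambda)=\mathrm{Tr}(MM^\dagger)$ the renormalization-group-running trace of the squared Majorana mass matrix, and $h(\Lambda)$ plays the role of $|H|^2$ for a (nearly constant) Higgs field $H$; in the paper it is taken to be $|H|^2\sim\mu_0^2/(2\lambda_0)$. $G_{{\rm eff},H}$ is the effective gravitational constant modified by the conformal coupling $-\frac1{12}\int R|H|^2$ to the Higgs field. *)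

From Stdlib Require Import Reals.
From Coquelicot Require Import Coquelicot.
Open Scope R_scope.

Definition cbrt (x : R) : R :=
  match Rlt_dec 0 x with
  | left _ => exp (ln x / 3)
  | right _ =>
      match Rlt_dec x 0 with
      | left _ => - exp (ln (- x) / 3)
      | right _ => 0
      end
  end.

Definition Geff (f0 f2 : R) (c : R -> R) (L : R) : R :=
  3 * PI / (192 * f2 * L ^ 2 - 2 * f0 * c L).

Definition GeffH (f0 f2 : R) (c h : R -> R) (L : R) : R :=
  Geff f0 f2 c L / (1 - 4 * PI / 3 * Geff f0 f2 c L * h L).

Definition continuous_on_Icc (f : R -> R) (a b : R) : Prop :=
  forall x, a <= x <= b ->
    filterlim f (within (fun y => a <= y <= b) (locally x)) (locally (f x)).

From Stdlib Require Import Reals Lra Psatz.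
From Coquelicot Require Import Coquelicot.
Open Scope R_scope.

(* Put t = L^-2 and m(L) = M(L^-2)^3.  If dM/dt = -(G M)^-2 then dm/dL =
   6 / (G(L)^2 L^3): the factor 3 M^2 of the cube cancels the M^-2, and
   dt/dL = -2 L^-3.  Integrating from L to L_in and taking cube roots gives
   both formulas; (a) and (b) only differ in G and in how 1/G^2 is written
   out.  Since M is only differentiable in the open interior, the
   fundamental theorem of calculus is obtained from the mean value theorem. *)

(* Precomposing with this retraction of R onto [a,b] turns continuity on
   [a,b] into continuity at every point of R. *)
Definition clamp (a b x : R) : R := Rmax a (Rmin b x).

Lemma clamp_in a b x : a <= b -> a <= clamp a b x <= b.
Proof. intros. unfold clamp, Rmax, Rmin. repeat destruct Rle_dec; lra. Qed.

Lemma clamp_id a b x : a <= x <= b -> clamp a b x = x.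
Proof. intros. unfold clamp, Rmax, Rmin. repeat destruct Rle_dec; lra. Qed.

Lemma clamp_lipschitz a b x y : Rabs (clamp a b x - clamp a b y) <= Rabs (x - y).
Proof.
  unfold clamp, Rmax, Rmin. repeat destruct Rle_dec;
  repeat match goal with |- context [Rabs ?z] =>
    destruct (Rcase_abs z); [rewrite (Rabs_left z) by lra | rewrite (Rabs_right z) by lra]
  end; lra.
Qed.

Lemma continuity_pt_clamp a b x : continuity_pt (clamp a b) x.
Proof.
  intros eps Heps. exists eps. split; [exact Heps|].
  intros y [_ Hy]. simpl in *. unfold R_dist in *.
  eapply Rle_lt_trans; [apply clamp_lipschitz | exact Hy].
Qed.

Lemma continuity_pt_clamp_comp (f : R -> R) a b x :
  a <= b -> continuous_on_Icc f a b -> continuity_pt (fun y => f (clamp a b y)) x.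
Proof.
  intros Hab Hf. apply continuity_pt_filterlim.
  apply (filterlim_comp _ _ _ (clamp a b) f _
           (within (fun y => a <= y <= b) (locally (clamp a b x)))).
  - intros P HP. apply (proj1 (continuity_pt_filterlim _ _) (continuity_pt_clamp a b x)) in HP.
    unfold filtermap in *. eapply filter_imp; [|exact HP].
    intros y Hy. apply Hy, clamp_in, Hab.
  - apply Hf, clamp_in, Hab.
Qed.

Lemma continuous_on_Icc_of_clamp (f : R -> R) a b :
  (forall x, continuity_pt (fun y => f (clamp a b y)) x) -> continuous_on_Icc f a b.
Proof.
  intros Hf x Hx. apply (filterlim_within_ext _ (fun y => f (clamp a b y))).
  { intros y Hy. rewrite clamp_id; auto. }
  replace (locally (f x)) with (locally (f (clamp a b x))) by now rewrite clamp_id.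
  eapply filterlim_filter_le_1; [apply filter_le_within|].
  exact (proj1 (continuity_pt_filterlim _ _) (Hf x)).
Qed.

Lemma continuous_on_Icc_subset (f : R -> R) a b c d :
  a <= c -> d <= b -> continuous_on_Icc f a b -> continuous_on_Icc f c d.
Proof.
  intros Hac Hdb Hf x Hx. eapply filterlim_filter_le_1; [|apply Hf; lra].
  intros P HP. unfold within in *. eapply filter_imp; [|exact HP].
  intros y Hy Hcd. apply Hy. lra.
Qed.

(* Coquelicot's [is_RInt_derive] needs the derivative at the end points too;
   here the mean value theorem shows that [Phi - RInt q a] has zero increment. *)
Lemma is_RInt_derive_interior (Phi q : R -> R) (a b : R) :
  a <= b -> continuous_on_Icc Phi a b -> continuous_on_Icc q a b ->
  (forall x, a < x < b -> is_derive Phi x (q x)) ->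
  is_RInt q a b (Phi b - Phi a).
Proof.
  intros Hab HPhi Hq HD.
  set (P := fun y => Phi (clamp a b y)). set (Q := fun y => q (clamp a b y)).
  assert (HQ : forall x, continuity_pt Q x) by (intros; apply continuity_pt_clamp_comp; auto).
  assert (HQint : forall u v, ex_RInt Q u v).
  { intros u v. apply (ex_RInt_continuous (V := R_CompleteNormedModule)).
    intros; apply continuity_pt_filterlim, HQ. }
  assert (HI : forall x, is_derive (fun y => RInt Q a y) x (Q x)).
  { intros x. apply (is_derive_RInt Q _ a x).
    - apply filter_forall. intros y. apply (RInt_correct (V := R_CompleteNormedModule)), HQint.
    - apply continuity_pt_filterlim, HQ. }
  destruct (MVT_gen (fun y => P y - RInt Q a y) a b (fun _ => 0)) as [z [_ Hz]].
  - rewrite Rmin_left, Rmax_right by exact Hab. intros x Hx.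
    replace 0 with (q x - Q x) by (unfold Q; rewrite clamp_id; lra).
    apply (is_derive_minus (V := R_NormedModule)); [|apply HI].
    apply (is_derive_ext_loc Phi); [|apply HD, Hx].
    exists (mkposreal (Rmin (x - a) (b - x)) ltac:(apply Rmin_pos; lra)).
    intros y Hy. apply Rabs_def2 in Hy. simpl in Hy.
    pose proof (Rmin_l (x - a) (b - x)). pose proof (Rmin_r (x - a) (b - x)).
    unfold P. rewrite clamp_id; [reflexivity | split; unfold minus, plus, opp in Hy; simpl in Hy; lra].
  - intros x _. apply continuity_pt_minus.
    + apply continuity_pt_clamp_comp; auto.
    + apply continuity_pt_filterlim, (ex_derive_continuous (fun y => RInt Q a y)).
      eexists. apply HI.
  - rewrite RInt_point in Hz. change zero with 0 in Hz.
    unfold P in Hz. rewrite !clamp_id in Hz by lra.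
    apply (is_RInt_ext Q).
    { intros x Hx. unfold Q. rewrite clamp_id; [reflexivity|].
      rewrite Rmin_left, Rmax_right in Hx by exact Hab. lra. }
    replace (Phi b - Phi a) with (RInt Q a b) by lra.
    apply (RInt_correct (V := R_CompleteNormedModule)), HQint.
Qed.

Lemma Rinv_pow2_le_contravar x y : 0 < x -> x <= y -> / y ^ 2 <= / x ^ 2.
Proof. intros. apply Rinv_le_contravar; simpl; nra. Qed.

Lemma Rinv_pow2_lt_contravar x y : 0 < x -> x < y -> / y ^ 2 < / x ^ 2.
Proof. intros. apply Rinv_lt_contravar; [apply Rmult_lt_0_compat|]; simpl; nra. Qed.

Lemma Rinv_sqrt_Rinv_pow2 x : 0 < x -> / sqrt (/ x ^ 2) = x.
Proof. intros. rewrite sqrt_inv, sqrt_pow2 by lra. apply Rinv_inv. Qed.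

Lemma cbrt_pow3 y : 0 < y -> cbrt (y ^ 3) = y.
Proof.
  intros Hy. unfold cbrt. destruct (Rlt_dec 0 (y ^ 3)) as [_|H].
  - rewrite ln_pow by lra. simpl INR.
    replace ((1 + 1 + 1) * ln y / 3) with (ln y) by field. apply exp_ln, Hy.
  - exfalso. apply H, pow_lt, Hy.
Qed.

Section MassCube.

Variables (G M : R -> R) (a b : R).
Hypotheses (Ha : 0 < a) (Hab : a <= b).
Hypotheses (HG : continuous_on_Icc G a b) (HG0 : forall x, a <= x <= b -> G x <> 0).
Hypotheses (HM : forall t, / b ^ 2 <= t <= / a ^ 2 -> 0 < M t)
  (HMc : continuous_on_Icc M (/ b ^ 2) (/ a ^ 2))
  (HMd : forall t, / b ^ 2 < t < / a ^ 2 -> is_derive M t (- / (G (/ sqrt t) * M t) ^ 2)).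

Lemma continuous_on_Icc_mass_cube : continuous_on_Icc (fun x => M (/ x ^ 2) ^ 3) a b.
Proof.
  apply continuous_on_Icc_of_clamp. intros x.
  set (Mc := fun t => M (clamp (/ b ^ 2) (/ a ^ 2) t)).
  assert (HMc' : continuity_pt Mc (/ clamp a b x ^ 2)).
  { apply continuity_pt_clamp_comp; [apply Rinv_pow2_le_contravar|]; assumption. }
  apply (continuity_pt_ext (fun y => Mc (/ clamp a b y ^ 2) ^ 3)).
  { intros y. unfold Mc. rewrite (clamp_id _ _ (/ _ ^ 2)); [reflexivity|].
    destruct (clamp_in a b y Hab). split; apply Rinv_pow2_le_contravar; lra. }
  assert (Hx := continuity_pt_clamp a b x). destruct (clamp_in a b x Hab).
  (* [reg] would split [Mc] into [M] and [clamp]; making it opaque stops that. *)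
  clearbody Mc. reg. apply pow_nonzero. lra.
Qed.

Lemma continuous_on_Icc_mass_rate : continuous_on_Icc (fun x => 6 / (G x ^ 2 * x ^ 3)) a b.
Proof.
  apply continuous_on_Icc_of_clamp. intros x.
  set (Gc := fun y => G (clamp a b y)).
  assert (HGc : continuity_pt Gc x) by (apply continuity_pt_clamp_comp; assumption).
  assert (Hx := continuity_pt_clamp a b x). destruct (clamp_in a b x Hab).
  assert (HGx : Gc x <> 0) by (apply HG0; lra).
  change (continuity_pt (fun y => 6 / (Gc y ^ 2 * clamp a b y ^ 3)) x).
  clearbody Gc. reg. apply Rmult_integral_contrapositive_currified; apply pow_nonzero; lra.
Qed.

Lemma is_derive_mass_cube x :
  a < x < b -> is_derive (fun y => M (/ y ^ 2) ^ 3) x (6 / (G x ^ 2 * x ^ 3)).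
Proof.
  intros Hx.
  assert (Ht : / b ^ 2 < / x ^ 2 < / a ^ 2) by (split; apply Rinv_pow2_lt_contravar; lra).
  assert (HMt : 0 < M (/ x ^ 2)) by (apply HM; lra).
  assert (HGx : G x <> 0) by (apply HG0; lra).
  assert (Hinv : is_derive (fun y => / y ^ 2) x (- 2 / x ^ 3)).
  { auto_derive; [nra | field; lra]. }
  assert (Hd := is_derive_pow _ 3 _ _ (is_derive_comp M _ x _ _ (HMd _ Ht) Hinv)).
  rewrite Rinv_sqrt_Rinv_pow2 in Hd by lra.
  change scal with Rmult in Hd.
  replace (6 / (G x ^ 2 * x ^ 3)) with
    (INR 3 * (-2 / x ^ 3 * - / (G x * M (/ x ^ 2)) ^ 2) * M (/ x ^ 2) ^ Init.Nat.pred 3).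
  - exact Hd.
  - simpl INR. simpl Init.Nat.pred. field. repeat split; lra.
Qed.

Lemma is_RInt_mass_rate L : a <= L <= b ->
  is_RInt (fun x => 6 / (G x ^ 2 * x ^ 3)) L b (M (/ b ^ 2) ^ 3 - M (/ L ^ 2) ^ 3).
Proof.
  intros HL. apply (is_RInt_derive_interior (fun x => M (/ x ^ 2) ^ 3)).
  - lra.
  - apply (continuous_on_Icc_subset _ a b); [lra | lra | apply continuous_on_Icc_mass_cube].
  - apply (continuous_on_Icc_subset _ a b); [lra | lra | apply continuous_on_Icc_mass_rate].
  - intros x Hx. apply is_derive_mass_cube. lra.
Qed.

Lemma mass_eq_cbrt (T : R -> R) (k L : R) : a <= L <= b -> k <> 0 ->
  (forall x, L <= x <= b -> T x = k / (G x ^ 2 * x ^ 3)) ->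
  M (/ L ^ 2) = cbrt (M (/ b ^ 2) ^ 3 - 6 / k * RInt T L b).
Proof.
  intros HL Hk HT.
  assert (HI : RInt T L b = k / 6 * (M (/ b ^ 2) ^ 3 - M (/ L ^ 2) ^ 3)).
  { apply is_RInt_unique, (is_RInt_ext (fun x => scal (k / 6) (6 / (G x ^ 2 * x ^ 3)))).
    - intros x Hx. rewrite Rmin_left, Rmax_right in Hx by lra.
      assert (HGx : G x <> 0) by (apply HG0; lra).
      change (k / 6 * (6 / (G x ^ 2 * x ^ 3)) = T x).
      rewrite HT by lra. field. split; lra.
    - exact (is_RInt_scal _ L b (k / 6) _ (is_RInt_mass_rate L HL)). }
  rewrite HI. replace (M (/ b ^ 2) ^ 3 - _) with (M (/ L ^ 2) ^ 3) by (field; exact Hk).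
  symmetry. apply cbrt_pow3, HM.
  split; apply Rinv_pow2_le_contravar; lra.
Qed.

End MassCube.

Lemma Geff_neq0 f0 f2 c L :
  192 * f2 * L ^ 2 - 2 * f0 * c L <> 0 -> Geff f0 f2 c L <> 0.
Proof.
  intros H. unfold Geff, Rdiv. pose proof PI_RGT_0.
  apply Rmult_integral_contrapositive_currified; [lra | apply Rinv_neq_0_compat, H].
Qed.

Lemma continuous_on_Icc_Geff f0 f2 c a b : a <= b -> continuous_on_Icc c a b ->
  (forall L, a <= L <= b -> 192 * f2 * L ^ 2 - 2 * f0 * c L <> 0) ->
  continuous_on_Icc (Geff f0 f2 c) a b.
Proof.
  intros Hab Hc Hden. apply continuous_on_Icc_of_clamp. intros x.
  set (cc := fun y => c (clamp a b y)).
  assert (Hcx : continuity_pt cc x) by (apply continuity_pt_clamp_comp; assumption).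
  assert (Hx := continuity_pt_clamp a b x).
  assert (Hdx : 192 * f2 * clamp a b x ^ 2 - 2 * f0 * cc x <> 0)
    by (apply Hden, clamp_in, Hab).
  change (continuity_pt (fun y => 3 * PI / (192 * f2 * clamp a b y ^ 2 - 2 * f0 * cc y)) x).
  clearbody cc. reg.
Qed.

Lemma GeffH_neq0 f0 f2 c h L : Geff f0 f2 c L <> 0 ->
  1 - 4 * PI / 3 * Geff f0 f2 c L * h L <> 0 -> GeffH f0 f2 c h L <> 0.
Proof.
  intros HG Hd. unfold GeffH, Rdiv.
  apply Rmult_integral_contrapositive_currified; [exact HG | apply Rinv_neq_0_compat, Hd].
Qed.

Lemma continuous_on_Icc_GeffH f0 f2 c h a b : a <= b ->
  continuous_on_Icc (Geff f0 f2 c) a b -> continuous_on_Icc h a b ->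
  (forall L, a <= L <= b -> 1 - 4 * PI / 3 * Geff f0 f2 c L * h L <> 0) ->
  continuous_on_Icc (GeffH f0 f2 c h) a b.
Proof.
  intros Hab HG Hh Hden. apply continuous_on_Icc_of_clamp. intros x.
  set (Gc := fun y => Geff f0 f2 c (clamp a b y)). set (hc := fun y => h (clamp a b y)).
  assert (HGx : continuity_pt Gc x) by (apply continuity_pt_clamp_comp; assumption).
  assert (Hhx : continuity_pt hc x) by (apply continuity_pt_clamp_comp; assumption).
  assert (Hdx : 1 - 4 * PI / 3 * Gc x * hc x <> 0) by (apply Hden, clamp_in, Hab).
  change (continuity_pt (fun y => Gc y / (1 - 4 * PI / 3 * Gc y * hc y)) x).
  clearbody Gc hc. reg.
Qed.

Theorem proposition4p7
  (f0 f2 L1 Lin : R) (c h : R -> R)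
  (Hf0 : 0 < f0) (Hf2 : 0 < f2) (HL1 : 0 < L1) (HL1in : L1 < Lin)
  (Hc : continuous_on_Icc c L1 Lin)
  (Hden : forall L, L1 <= L <= Lin -> 192 * f2 * L ^ 2 - 2 * f0 * c L <> 0)
  (Hh : continuous_on_Icc h L1 Lin)
  (HdenH : forall L, L1 <= L <= Lin -> 1 - 4 * PI / 3 * Geff f0 f2 c L * h L <> 0) :
  (forall M : R -> R,
     (forall t, / Lin ^ 2 <= t <= / L1 ^ 2 -> 0 < M t) ->
     continuous_on_Icc M (/ Lin ^ 2) (/ L1 ^ 2) ->
     (forall t, / Lin ^ 2 < t < / L1 ^ 2 ->
        is_derive M t (- / (Geff f0 f2 c (/ sqrt t) * M t) ^ 2)) ->
     forall L, L1 <= L <= Lin ->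
       M (/ L ^ 2) =
       cbrt (M (/ Lin ^ 2) ^ 3
             - 2 / (3 * PI ^ 2)
               * RInt (fun x => (192 * f2 * x ^ 2 - 2 * f0 * c x) ^ 2 / x ^ 3) L Lin))
  /\
  (forall M : R -> R,
     (forall t, / Lin ^ 2 <= t <= / L1 ^ 2 -> 0 < M t) ->
     continuous_on_Icc M (/ Lin ^ 2) (/ L1 ^ 2) ->
     (forall t, / Lin ^ 2 < t < / L1 ^ 2 ->
        is_derive M t (- / (GeffH f0 f2 c h (/ sqrt t) * M t) ^ 2)) ->
     forall L, L1 <= L <= Lin ->
       M (/ L ^ 2) =
       cbrt (M (/ Lin ^ 2) ^ 3
             - 6 * RInt (fun x => (1 - 4 * PI / 3 * Geff f0 f2 c x * h x) ^ 2
                                  / (x ^ 3 * Geff f0 f2 c x ^ 2)) L Lin)).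
Proof.
  assert (HPI := PI_RGT_0). assert (Hle : L1 <= Lin) by lra.
  assert (HG0 : forall x, L1 <= x <= Lin -> Geff f0 f2 c x <> 0)
    by (intros; apply Geff_neq0, Hden; assumption).
  assert (HG := continuous_on_Icc_Geff f0 f2 c L1 Lin Hle Hc Hden).
  split; intros M HM HMc HMd L HL.
  - replace (2 / (3 * PI ^ 2)) with (6 / (9 * PI ^ 2)) by (field; lra).
    apply (mass_eq_cbrt (Geff f0 f2 c) M L1 Lin); auto.
    + apply Rmult_integral_contrapositive_currified; [lra | apply pow_nonzero; lra].
    + intros x Hx. assert (Hdx := Hden x ltac:(lra)).
      unfold Geff. field. repeat split; lra.
  - rewrite <- (Rdiv_1_r 6).
    apply (mass_eq_cbrt (GeffH f0 f2 c h) M L1 Lin); auto using R1_neq_R0.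
    + apply continuous_on_Icc_GeffH; assumption.
    + intros x Hx. apply GeffH_neq0; auto.
    + intros x Hx. assert (HGx := HG0 x ltac:(lra)). assert (HHx := HdenH x ltac:(lra)).
      unfold GeffH. field. repeat split; lra.
Qed.
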